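(* Let $m\geqslant 2$ be an integer and let $\pi$ be an irreducible unitary cuspidal representation of $GL_m(\mathbb A_{\mathbb Q})$. For any prime $p$ such that $\pi_p$ is unramified, $$|\lambda_\pi(p^m)|+|\lambda_\pi(p^{m-1})|+\cdots+|\lambda_\pi(p)|\geqslant \frac1m.$$
   Context: To $\pi=\otimes\pi_p$ one attaches $L(s,\pi)=\prod_p\prod_{j=1}^m(1-\alpha_\pi(p,j)p^{-s})^{-1}$ for $\Re s>1$, where $\{\alpha_\pi(p,j)\}_{j=1}^m$ are the local (Satake) parameters of $\pi_p$. Writing $L(s,\pi)=\sum_{n\ge1}\lambda_\pi(n)n^{-s}$, one has $\lambda_\pi(n)=\prod_{p^\nu\| n}\sum_{\nu_1+\cdots+\nu_m=\nu}\alpha_\pi(p,1)^{\nu_1}\cdots\alpha_\pi(p,m)^{\nu_m}$. *)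

From HB Require Import structures.
From mathcomp Require Import all_boot all_order all_algebra.
From mathcomp Require Import perm complex.
Set Implicit Arguments. Unset Strict Implicit. Unset Printing Implicit Defensive.
Import Order.TTheory GRing.Theory Num.Theory.
Local Open Scope ring_scope.

(* Local Satake parameters of pi_p : a family alpha : 'I_m -> C.
   lambda_pi(p^nu) = sum_{nu_1+...+nu_m = nu} prod_j alpha_j^{nu_j}
   (exponent vectors nu_j range over 'I_(nu.+1), i.e. 0 <= nu_j <= nu). *)
Definition lambda_pp (R : rcfType) (m : nat) (alpha : 'I_m -> R[i]) (nu : nat)
  : R[i] :=
  \sum_(f : {ffun 'I_m -> 'I_nu.+1} | (\sum_(j < m) (f j : nat))%N == nu)
     \prod_(j < m) alpha j ^+ (f j).

(* Local shadow of "pi unitary cuspidal on GL_m(A_Q), pi_p unramified", in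
   terms of the Satake parameters at p:
   - unitarity (pi~ = conj pi): the multiset {alpha_j} equals
     {conj(alpha_j)^{-1}} (in particular every alpha_j is nonzero);
   - generic/cuspidal: the Luo-Rudnick-Sarnak type bound |alpha_j|^2 < p. *)
Definition unitary_unramified_satake (R : rcfType) (m p : nat)
  (alpha : 'I_m -> R[i]) : Prop :=
  (exists s : {perm 'I_m}, forall j, alpha (s j) * (alpha j)^* = 1)
  /\ (forall j, `|alpha j| ^+ 2 < p%:R).

From HB Require Import structures.
From mathcomp Require Import all_boot all_order all_algebra.
From mathcomp Require Import perm complex ring.
Import Order.TTheory GRing.Theory Num.Theory.
Local Open Scope ring_scope.

(* With e_k and h_k the elementary and complete homogeneous symmetric
   polynomials in the Satake parameters, lambda_pi(p^k) = h_k and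
   sum_(k <= n) (-1)^k e_k h_(n-k) = 0 for n > 0, because the generating
   series of the h_k is the inverse of prod_j (1 - alpha_j X).  Hence
   |e_n| <= max_(k < n) |e_k| * S, where S = sum_(1 <= k <= m) |h_k|.
   If S < 1 this forces |e_n| <= 1 for all n <= m, and then |e_m| <= S < 1;
   but e_m = prod_j alpha_j has modulus 1 by unitarity.  So S >= 1 >= 1/m. *)

Section InverseSeries.

Context {C : numDomainType} {m : nat} {c h : nat -> C}.
Hypotheses (c0 : c 0%N = 1) (h0 : h 0%N = 1).
Hypothesis conv_eq0 :
  forall n, (0 < n <= m)%N -> \sum_(k < n.+1) c k * h (n - k)%N = 0.

Let S : C := \sum_(1 <= k < m.+1) `|h k|.

Lemma sum_norm_rev_le n : (n <= m)%N -> \sum_(k < n) `|h (n - k)%N| <= S.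
Proof.
move=> le_nm; rewrite /S (big_cat_nat _ (n := n.+1)) //=.
rewrite big_nat_rev big_add1 /= big_mkord.
under [X in _ <= X + _]eq_bigr => k _ do rewrite add1n subSS.
by rewrite lerDl sumr_ge0.
Qed.

Lemma norm_conv_coef_le n :
  (0 < n <= m)%N -> (forall k, (k < n)%N -> `|c k| <= 1) -> `|c n| <= S.
Proof.
move=> n_range c_le1.
have c_n : c n = - \sum_(k < n) c k * h (n - k)%N.
  have := conv_eq0 _ n_range; rewrite big_ord_recr /= subnn h0 mulr1 addrC.
  by move/eqP; rewrite addr_eq0 => /eqP.
rewrite c_n normrN; apply: (le_trans (ler_norm_sum _ _ _)).
apply: le_trans (sum_norm_rev_le _ (proj2 (andP n_range))).
apply: ler_sum => k _; rewrite normrM -[leRHS]mul1r ler_wpM2r //.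
exact: c_le1.
Qed.

Hypotheses (m_gt0 : (0 < m)%N) (norm_cm : `|c m| = 1).

Lemma sum_norm_conv_inverse_ge1 : 1 <= S.
Proof.
have S_ge0 : 0 <= S by apply: sumr_ge0 => k _.
have [//|S_lt1] := real_leP (real1 C) (ger0_real S_ge0).
have c_le1 n : (n <= m)%N -> `|c n| <= 1.
  elim/ltn_ind: n => -[|n] IHn le_nm; first by rewrite c0 normr1.
  apply/ltW/(le_lt_trans _ S_lt1)/norm_conv_coef_le => [|k lt_kn]; first exact: le_nm.
  by apply: IHn lt_kn (leq_trans (ltnW lt_kn) le_nm).
have c_m_le : `|c m| <= S.
  by apply: norm_conv_coef_le => [|k /ltnW]; [rewrite m_gt0 leqnn | exact: c_le1].
by move: (le_lt_trans c_m_le S_lt1); rewrite norm_cm ltxx.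
Qed.

End InverseSeries.

Lemma coef_prod_1subCXn (C : comNzRingType) (I : Type) (r : seq I) (a : I -> C) n k :
  (k < n)%N -> (\prod_(i <- r) (1 - (a i)%:P * 'X^n))`_k = (k == 0%N)%:R.
Proof.
have [q ->] : exists q, \prod_(i <- r) (1 - (a i)%:P * 'X^n) = 1 + q * 'X^n.
  elim: r => [|i r [q IHr]]; first by exists 0; rewrite big_nil mul0r addr0.
  exists (q - (a i)%:P - (a i)%:P * q * 'X^n); rewrite big_cons IHr; ring.
by move=> lt_kn; rewrite coefD coef1 coefMXn lt_kn addr0.
Qed.

Lemma coef_prod_1subCX_size (C : comNzRingType) (I : Type) (r : seq I) (a : I -> C) :
  (\prod_(i <- r) (1 - (a i)%:P * 'X))`_(size r) = \prod_(i <- r) - a i.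
Proof.
suff top_coef k : (size r <= k)%N -> (\prod_(i <- r) (1 - (a i)%:P * 'X))`_k
    = if k == size r then \prod_(i <- r) - a i else 0.
  by rewrite top_coef ?eqxx.
elim: r k => [|i r IHr] k le_rk /=; first by rewrite !big_nil coef1; case: k le_rk.
rewrite !big_cons mulrBl mul1r -mulrA coefB coefCM coefXM IHr ?(ltnW le_rk) //.
rewrite (gtn_eqF le_rk) sub0r; case: k le_rk => // k le_rk /=.
by rewrite IHr // eqSS; case: eqP; rewrite ?mulr0 ?oppr0 // mulNr.
Qed.

Lemma sum_expr_mul_1subr (C : comPzRingType) (x : C) n :
  (\sum_(k < n) x ^+ k) * (1 - x) = 1 - x ^+ n.
Proof. by rewrite mulrC -opprB mulNr -subrX1 opprB. Qed.

Lemma norm_prod_eq1_of_conj_perm (C : numClosedFieldType) (I : finType)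
    (a : I -> C) (s : {perm I}) :
  (forall i, a (s i) * (a i)^* = 1) -> `|\prod_i a i| = 1.
Proof.
move=> a_conj; have : \prod_i a (s i) * \prod_i (a i)^* = 1.
  by rewrite -big_split; apply: big1 => i _; exact: a_conj.
rewrite -(reindex_inj (P := xpredT) (F := a) (@perm_inj _ s)) /=.
rewrite -rmorph_prod -normCK => /eqP.
by rewrite -[X in _ == X](expr1n C 2) eqrXn2 // => /eqP.
Qed.

Section LocalFactor.

Context {R : rcfType} {m : nat} (alpha : 'I_m -> R[i]).

(* [inv_local_factor] is L_p(s, pi)^-1 and [trunc_local_factor N] the
   truncation of L_p(s, pi) at degree N, both in the variable X = p^-s. *)
Definition inv_local_factor : {poly R[i]} := \prod_(j < m) (1 - (alpha j)%:P * 'X).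

Definition trunc_local_factor (N : nat) : {poly R[i]} :=
  \prod_(j < m) \sum_(k < N.+1) ((alpha j)%:P * 'X) ^+ k.

Lemma coef_trunc_local_factor N n :
  (n <= N)%N -> (trunc_local_factor N)`_n = lambda_pp alpha n.
Proof.
move=> le_nN; rewrite /trunc_local_factor.
under eq_bigr => j _ do under eq_bigr => k _ do rewrite exprMn -rmorphXn.
rewrite bigA_distr_bigA /= coef_sum.
under eq_bigr => f _ do rewrite big_split /= -rmorph_prod prodrXr coefCM coefXn.
rewrite (bigID (fun f : {ffun 'I_m -> 'I_N.+1} => (\sum_j (f j : nat))%N == n)) /=.
rewrite [X in _ + X]big1 ?addr0 => [|f /negbTE sum_f_neq]; last first.
  by rewrite eq_sym sum_f_neq mulr0.
under eq_bigr => f /eqP sum_f do rewrite sum_f eqxx mulr1.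
have le_n1N1 : (n.+1 <= N.+1)%N by [].
pose widen (g : {ffun 'I_m -> 'I_n.+1}) := [ffun j => widen_ord le_n1N1 (g j)].
pose narrow (f : {ffun 'I_m -> 'I_N.+1}) := [ffun j => inord (f j) : 'I_n.+1].
rewrite (reindex_onto widen narrow) => [|f /eqP sum_f]; last first.
  apply/ffunP => j; rewrite !ffunE; apply: val_inj => /=.
  by rewrite inordK // ltnS -sum_f (bigD1 j) //= leq_addr.
apply: eq_big => [g|g _]; last by apply: eq_bigr => j _; rewrite ffunE.
have -> : narrow (widen g) = g.
  by apply/ffunP => j; rewrite !ffunE; apply: val_inj; rewrite /= inordK.
by rewrite eqxx andbT; congr (_ == _); apply: eq_bigr => j _; rewrite ffunE.
Qed.

Lemma coef_inv_local_factorM_trunc N k :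
  (k <= N)%N -> (inv_local_factor * trunc_local_factor N)`_k = (k == 0%N)%:R.
Proof.
rewrite /inv_local_factor /trunc_local_factor -big_split /=.
under eq_bigr => j _ do rewrite mulrC sum_expr_mul_1subr exprMn -rmorphXn.
by move=> le_kN; rewrite coef_prod_1subCXn.
Qed.

Lemma coef0_inv_local_factor : inv_local_factor`_0 = 1.
Proof.
rewrite coef0_prod big1 // => j _.
by rewrite coefB coef1 coefCM coefX mulr0 subr0.
Qed.

Lemma norm_coef_inv_local_factor_top :
  `|inv_local_factor`_m| = `|\prod_(j < m) alpha j|.
Proof.
have := @coef_prod_1subCX_size _ _ (enum 'I_m) alpha.
rewrite size_enum_ord !big_enum /= -/inv_local_factor => ->.
by rewrite !normr_prod; apply: eq_bigr => j _; rewrite normrN.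
Qed.

End LocalFactor.

Theorem lemma4p12 (R : rcfType) (m p : nat) (alpha : 'I_m -> R[i]) :
  (2 <= m)%N -> prime p -> unitary_unramified_satake p alpha ->
  \sum_(1 <= k < m.+1) `|lambda_pp alpha k| >= (m%:R)^-1.
Proof.
move=> m_ge2 _ [[s alpha_conj] _].
pose c k := (inv_local_factor alpha)`_k.
have conv n : (n <= m)%N ->
    \sum_(k < n.+1) c k * lambda_pp alpha (n - k) = (n == 0%N)%:R.
  move=> le_nm; rewrite -(coef_inv_local_factorM_trunc alpha m n le_nm) coefM.
  apply: eq_bigr => k _; rewrite coef_trunc_local_factor //.
  exact: leq_trans (leq_subr _ _) le_nm.
have c0 : c 0%N = 1 by exact: coef0_inv_local_factor.
have h0 : lambda_pp alpha 0 = 1.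
  by have := conv 0%N isT; rewrite big_ord1 c0 mul1r.
have conv_eq0 n : (0 < n <= m)%N ->
    \sum_(k < n.+1) c k * lambda_pp alpha (n - k) = 0.
  by case/andP=> n_gt0 le_nm; rewrite conv // gtn_eqF.
have norm_cm : `|c m| = 1.
  by rewrite norm_coef_inv_local_factor_top (norm_prod_eq1_of_conj_perm _ _ _ s).
apply: le_trans (sum_norm_conv_inverse_ge1 c0 h0 conv_eq0 (ltnW m_ge2) norm_cm).
by rewrite invf_le1 ?ltr0n ?ler1n // ltnW.
Qed.
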